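(* Let $(\Omega,\mathcal F,\mu)$ be a measure space and $p\in[1,\infty]$. Then for every $k\geq 1$ the set $\mathscr G_{p,k}$ is proximinal in $L^p(\Omega,\mathcal F,\mu)$; that is, for every $f\in L^p(\Omega,\mathcal F,\mu)$ there exists $g\in\mathscr G_{p,k}$ with $\|f-g\|_p=\mathscr D_{p,k}(f)$.
   Context: All measures are assumed not identically zero. For $p\in[1,\infty]$ and $k\ge 1$, $\mathscr G_{p,k}$ denotes the set of functions of the form $\sum_{i=1}^l a_i\mathbf 1_{A_i}$ that belong to $L^p(\Omega,\mathcal F,\mu)$, where $l\le k$, $\{A_i\}_{1\le i\le l}$ is a measurable partition of $\Omega$ and $a_i\in\mathbb R$ (for $p<\infty$ this forces $a_i=0$ whenever $\mu(A_i)=\infty$). For $f\in L^p$, $\mathscr D_{p,k}(f)=\inf\{\|f-h\|_p:\ h\in\mathscr G_{p,k}\}$. A subset $K$ of a Banach space $X$ is proximinal if for every $x\in X$ the set $P_K(x)=\{y\in K:\ \|x-y\|=d(x,K)\}$ is nonempty. *)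

From HB Require Import structures.
From mathcomp Require Import all_boot all_order all_algebra.
From mathcomp Require Import all_classical all_reals all_analysis.
Set Implicit Arguments. Unset Strict Implicit. Unset Printing Implicit Defensive.
Import Order.TTheory GRing.Theory Num.Theory.
Local Open Scope classical_set_scope.
Local Open Scope ring_scope.

(** Elements of L^p are represented by measurable real functions with finite
    L^p norm (the statement is invariant under a.e. equality). *)
Definition inLp d (T : measurableType d) (R : realType)
  (mu : {measure set T -> \bar R}) (p : \bar R) (f : T -> R) : Prop :=
  measurable_fun [set: T] f /\ finite_norm mu p f.

Definition step_fun d (T : measurableType d) (R : realType) (k : nat)
  (h : T -> R) : Prop :=
  exists l : nat, exists A : 'I_l -> set T, exists a : 'I_l -> R,
    [/\ (l <= k)%N,
        (forall i, measurable (A i)),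
        trivIset [set: 'I_l] A,
        \bigcup_(i in [set: 'I_l]) A i = [set: T] &
        h = fun x => \sum_(i < l) a i * \1_(A i) x].

Definition Gpk d (T : measurableType d) (R : realType)
  (mu : {measure set T -> \bar R}) (p : \bar R) (k : nat) : set (T -> R) :=
  [set h | step_fun k h /\ inLp mu p h].

Definition Dpk d (T : measurableType d) (R : realType)
  (mu : {measure set T -> \bar R}) (p : \bar R) (k : nat) (f : T -> R) : \bar R :=
  ereal_inf [set Lnorm mu p (EFin \o (f \- h)) | h in Gpk mu p k].

From HB Require Import structures.
From mathcomp Require Import all_boot all_order all_algebra.
From mathcomp Require Import all_classical all_reals all_analysis.
From mathcomp Require Import lra measurable_realfun ess_sup_inf.
Set Implicit Arguments. Unset Strict Implicit. Unset Printing Implicit Defensive.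
Import Order.TTheory GRing.Theory Num.Theory numFieldNormedType.Exports.
Local Open Scope classical_set_scope.
Local Open Scope ring_scope.

(* A step function with at most k values is pointwise no closer to f than the
   function sending each point to the nearest of these values, so the infimum
   D_{p,k}(f) may be taken over the nearest-value functions g_c of k-tuples c.
   Take tuples c_n with ||f - g_{c_n}||_p -> D_{p,k}(f) and pass to a
   subsequence along which every coordinate either converges or tends to
   infinity in absolute value; let L collect the finite limits (and arbitrary
   values for the diverging coordinates).  Then |f - g_L| is pointwise at most
   the lim inf of |f - g_{c_n}|, and Fatou's lemma gives
   ||f - g_L||_p <= D_{p,k}(f). *)

Section eventually_gt.
Context (R : realType).
Local Open Scope ereal_scope.

Definition eventually_gt (u : (\bar R)^nat) (y : \bar R) : Prop :=
  forall a : R, a%:E < y -> \forall n \near \oo, a%:E < u n.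

Lemma lee_fin_lt (y z : \bar R) :
  (forall a : R, a%:E < y -> a%:E <= z) -> y <= z.
Proof.
case: z => [r| |] yz; last 2 first.
- exact: leey.
- case: y yz => [s| |] yz //.
  + by have := yz (s - 1)%R; rewrite lte_fin ltrBlDr ltrDl ltr01 leeNy_eq => /(_ isT).
  + by have := yz 0%R (ltry _).
rewrite leNgt; apply/negP => ry; case: y ry yz => [s| |] ry yz //.
- have := yz ((r + s) / 2)%R; rewrite !lte_fin !lee_fin; rewrite lte_fin in ry.
  have mid_lt : ((r + s) / 2 < s)%R by lra.
  have mid_gt : ~~ ((r + s) / 2 <= r)%R by rewrite -ltNge; lra.
  by move=> /(_ mid_lt); apply/negP.
- have := yz (r + 1)%R (ltry _); rewrite lee_fin; apply/negP; rewrite -ltNge; lra.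
Qed.

Lemma limn_einfE (u : (\bar R)^nat) : limn_einf u = ereal_sup (range (einfs u)).
Proof. by rewrite limn_einf_lim; apply/cvg_lim => //; exact: cvg_einfs_sup. Qed.

Lemma limn_einf_ge (u : (\bar R)^nat) y : eventually_gt u y -> y <= limn_einf u.
Proof.
move=> uy; apply: lee_fin_lt => a /uy [N _ uNa].
have uN : einfs u N <= ereal_sup (range (einfs u)) by apply: ereal_sup_ubound; exists N.
rewrite limn_einfE; apply: le_trans uN.
by apply: le_ereal_inf_tmp => _ [m /= Nm <-]; exact/ltW/uNa.
Qed.

Lemma limn_einf_le (u : (\bar R)^nat) B :
  (\forall n \near \oo, u n <= B) -> limn_einf u <= B.
Proof.
case=> N _ uNB; rewrite limn_einfE; apply: ge_ereal_sup => _ [m _ <-].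
apply: le_trans (uNB (maxn m N) (leq_maxr _ _)).
by apply: ereal_inf_lbound; exists (maxn m N) => //=; exact: leq_maxl.
Qed.

Lemma eventually_gt_poweR (u : (\bar R)^nat) y (r : R) : (0 < r)%R ->
  (forall n, 0 <= u n) -> 0 <= y -> eventually_gt u y ->
  eventually_gt (fun n => u n `^ r) (y `^ r).
Proof.
move=> r0 u0 y0 uy a ay.
have [a0|a0] := ltP a 0%R.
  by apply: nearW => n; apply: lt_le_trans (poweR_ge0 _ _); rewrite lte_fin.
pose b := (a `^ r^-1)%R.
have bK : (b `^ r = a)%R by rewrite /b -powRrM mulVf ?gt_eqF// powRr1.
have b0 : (0 <= b)%R by exact: powR_ge0.
have by_ : b%:E < y.
  rewrite ltNge; apply/negP => yb.
  have := gt0_ler_poweR (ltW r0) _ _ yb.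
  rewrite !in_itv /= y0 leey lee_fin b0 /= bK leey => /(_ isT isT) ya.
  by move: (lt_le_trans ay ya); rewrite ltxx.
apply: filterS (uy _ by_) => n; case: (u n) => [s| |] //= bs.
  rewrite lte_fin -bK; apply: gt0_ltr_powR => //; rewrite ?nnegrE //.
  by rewrite lte_fin in bs; rewrite (le_trans b0 (ltW bs)).
by rewrite gt_eqF // ltry.
Qed.

End eventually_gt.

Section subsequences.
Context (R : realType).

Lemma leq_increasing_seq (s : nat -> nat) : increasing_seq s -> forall n, (n <= s n)%N.
Proof.
by move=> /increasing_seqP s_incr; elim=> // n IH; apply: leq_ltn_trans IH (s_incr n).
Qed.

Lemma cvgn_increasing_seq (s : nat -> nat) : increasing_seq s -> s @ \oo --> \oo.
Proof.
move=> s_incr; apply/cvgnyPge => N; near=> n.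
by apply: leq_trans (leq_increasing_seq s_incr n); near: n; exact: nbhs_infty_ge.
Unshelve. all: end_near. Qed.

Lemma increasing_seq_comp (s t : nat -> nat) :
  increasing_seq s -> increasing_seq t -> increasing_seq (s \o t).
Proof. by move=> s_incr t_incr m n /=; rewrite s_incr; exact: t_incr. Qed.

Lemma increasing_seq_frequently (P : nat -> Prop) :
  (forall N, exists m, (N <= m)%N /\ P m) ->
  exists2 s, increasing_seq s & forall n, P (s n).
Proof.
move=> /choice[next next_spec].
pose s := fix s n := if n is n'.+1 then next (s n').+1 else next 0%N.
exists s; last by case=> [|n]; [case: (next_spec 0%N) | case: (next_spec (s n).+1)].
by apply/increasing_seqP => n; case: (next_spec (s n).+1).
Qed.

(* The value [l] is irrelevant in the second alternative. *)
Definition cvg_or_diverge (u : R^nat) (l : R) : Prop :=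
  u @ \oo --> l \/ (fun n => `|u n|) @ \oo --> +oo.

Lemma cvg_or_diverge_subseq (u : R^nat) l s :
  increasing_seq s -> cvg_or_diverge u l -> cvg_or_diverge (u \o s) l.
Proof.
move=> /cvgn_increasing_seq s_oo [ul|uoo]; [left|right].
  exact: cvg_comp s_oo ul.
exact: (cvg_comp _ _ s_oo uoo).
Qed.

Lemma cvg_or_diverge_subsequence (u : R^nat) :
  exists2 s, increasing_seq s & exists l, cvg_or_diverge (u \o s) l.
Proof.
have [[M bounded_often]|never_bounded] :=
  pselect (exists M, forall N, exists m, (N <= m)%N /\ `|u m| <= M).
  have [s s_incr usM] := increasing_seq_frequently bounded_often.
  have [t t_incr /cvg_ex[l ul]] : exists2 t, increasing_seq t & cvgn (u \o s \o t).
    apply: bolzano_weierstrass; rewrite /bounded_near; near=> M'.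
    move=> n _ /=; apply: le_trans (usM n) _.
    by near: M'; exact: nbhs_pinfty_ge (num_real M).
  by exists (s \o t); [exact: increasing_seq_comp|exists l; left].
exists id => //; exists 0; right; apply/cvgryPgt => M.
apply: contrapT => not_eventually; apply: never_bounded; exists M => N.
apply: contrapT => no_m; apply: not_eventually; exists N => // m /= Nm.
by rewrite ltNge; apply/negP => umM; apply: no_m; exists m.
Unshelve. all: end_near. Qed.

Lemma common_subsequence (k : nat) (c : nat -> 'I_k -> R) :
  exists2 s, increasing_seq s &
    exists L : 'I_k -> R, forall i, cvg_or_diverge (fun n => c (s n) i) (L i).
Proof.
suff [s s_incr sc] : exists2 s, increasing_seq s & forall i : 'I_k,
    exists l, cvg_or_diverge (fun n => c (s n) i) l.
  by exists s => //; have [L cL] := choice sc; exists L.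
suff : forall j, exists2 s, increasing_seq s & forall i : 'I_k, (i < j)%N ->
    exists l, cvg_or_diverge (fun n => c (s n) i) l.
  by move=> /(_ k)[s s_incr sc]; exists s => // i; exact: sc.
elim=> [|j [s s_incr sc]]; first by exists id.
have [jk|kj] := ltnP j k; last first.
  by exists s => // i ij; apply: sc; exact: leq_trans (ltn_ord i) kj.
have [t t_incr [l cl]] := cvg_or_diverge_subsequence (fun n => c (s n) (Ordinal jk)).
exists (s \o t); first exact: increasing_seq_comp.
move=> i; rewrite ltnS leq_eqVlt => /orP[/eqP ij|ij].
  by exists l; rewrite (_ : i = Ordinal jk) //; exact: val_inj.
by have [l' cl'] := sc i ij; exists l'; exact: (cvg_or_diverge_subseq t_incr cl').
Qed.

Lemma cvg_or_diverge_near_dist (u : R^nat) l (y a : R) :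
  cvg_or_diverge u l -> a < `|y - l| -> \forall n \near \oo, a < `|y - u n|.
Proof.
case=> [ul|uoo] al.
  have yu : `|y - u n| @[n --> \oo] --> `|y - l|.
    by apply: cvg_norm; apply: cvgB => //; exact: cvg_cst.
  exact: cvgr_gt yu _ al.
move/cvgryPgt : uoo => /(_ (a + `|y|)); apply: filterS => n ua.
have : `|u n| <= `|y - u n| + `|y|.
  by rewrite distrC; apply: le_trans (ler_normD _ _); rewrite subrK.
have := ler_norm a; lra.
Qed.

End subsequences.

Section nearest_value.
Context (T : Type) (R : realType) (k : nat) (f : T -> R).

(* Ties are broken towards the smallest index, so that the cells are disjoint. *)
Definition nearest_cell (c : 'I_k -> R) (i : 'I_k) : set T :=
  [set x | (forall j, `|f x - c i| <= `|f x - c j|) /\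
           (forall j : 'I_k, (j < i)%N -> `|f x - c i| < `|f x - c j|)].

Definition nearest_value (c : 'I_k -> R) (x : T) : R :=
  \sum_(i < k) c i * \1_(nearest_cell c i) x.

Variable c : 'I_k -> R.

Lemma nearest_cell_cover : (0 < k)%N -> forall x, exists i, nearest_cell c i x.
Proof.
move=> k_gt0 x; pose dist i := `|f x - c i|.
pose P n := [exists i : 'I_k, (val i == n) && [forall j, dist i <= dist j]].
have exP : exists n, P n.
  case: (arg_minP dist (P := xpredT) (i0 := Ordinal k_gt0)) => // i _ i_min.
  by exists (val i); apply/existsP; exists i; rewrite eqxx; apply/forallP => j; exact: i_min.
case: (ex_minnP exP) => _ /existsP[i /andP[/eqP <- /forallP i_min]] i_first.
exists i; split => // j ji; rewrite ltNge; apply/negP => dji.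
have : P j.
  by apply/existsP; exists j; rewrite eqxx; apply/forallP => j'; exact: le_trans dji (i_min j').
by move/i_first; rewrite leqNgt ji.
Qed.

Lemma nearest_cell_uniq i j x : nearest_cell c i x -> nearest_cell c j x -> i = j.
Proof.
case=> i_min i_first [j_min j_first]; case: (ltngtP i j) => [ij|ji|/val_inj//].
  by have := j_first _ ij; rewrite ltNge i_min.
by have := i_first _ ji; rewrite ltNge j_min.
Qed.

Lemma nearest_valueE i x : nearest_cell c i x -> nearest_value c x = c i.
Proof.
move=> xi; rewrite /nearest_value (bigD1 i) //= indicE mem_set// mulr1.
rewrite big1 ?addr0 // => j ji; rewrite indicE memNset ?mulr0 // => xj.
by move/eqP: ji; apply; exact: nearest_cell_uniq xj xi.
Qed.

Hypothesis k_gt0 : (0 < k)%N.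

Lemma nearest_value_le x j : `|f x - nearest_value c x| <= `|f x - c j|.
Proof. by have [i xi] := nearest_cell_cover k_gt0 x; rewrite (nearest_valueE xi); case: xi. Qed.

Lemma nearest_value_range x : exists i, nearest_value c x = c i.
Proof. by have [i xi] := nearest_cell_cover k_gt0 x; exists i; exact: nearest_valueE. Qed.

End nearest_value.

Lemma nearest_value_eventually_gt (T : Type) (R : realType) (k : nat) (f : T -> R)
    (c : nat -> 'I_k -> R) (L : 'I_k -> R) x :
  (0 < k)%N -> (forall i, cvg_or_diverge (c ^~ i) (L i)) ->
  eventually_gt (fun n => (`|f x - nearest_value f (c n) x|)%:E)
                (`|f x - nearest_value f L x|)%:E.
Proof.
move=> k_gt0 cL a; rewrite lte_fin => a_lt.
have : \forall n \near \oo, forall i, a < `|f x - c n i|.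
  apply: filter_forall => i; apply: cvg_or_diverge_near_dist (cL i) _.
  exact: lt_le_trans a_lt (nearest_value_le f L k_gt0 x i).
apply: filterS => n a_lt_c.
by have [i ->] := nearest_value_range f (c n) k_gt0 x; rewrite lte_fin.
Qed.

Section measurable_nearest_value.
Context d (T : measurableType d) (R : realType).

Lemma measurable_set_ler (u v : T -> R) : measurable_fun [set: T] u ->
  measurable_fun [set: T] v -> measurable [set x | u x <= v x].
Proof.
move=> mfu mfv; have mtrue : measurable [set true] by [].
by have := measurable_fun_ler mfu mfv measurableT mtrue; rewrite setTI.
Qed.

Lemma measurable_set_ltr (u v : T -> R) : measurable_fun [set: T] u ->
  measurable_fun [set: T] v -> measurable [set x | u x < v x].
Proof.
move=> mfu mfv; have mtrue : measurable [set true] by [].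
by have := measurable_fun_ltr mfu mfv measurableT mtrue; rewrite setTI.
Qed.

Variables (k : nat) (f : T -> R) (c : 'I_k -> R).
Hypothesis mf : measurable_fun [set: T] f.

Lemma measurable_nearest_cell i : measurable (nearest_cell f c i).
Proof.
have mdist (r : R) : measurable_fun [set: T] (fun x => `|f x - r|).
  by apply: measurableT_comp => //; exact: measurable_funB.
have -> : nearest_cell f c i =
    \bigcap_(j in [set: 'I_k]) [set x | `|f x - c i| <= `|f x - c j|] `&`
    \bigcap_(j in [set j : 'I_k | (j < i)%N]) [set x | `|f x - c i| < `|f x - c j|].
  apply/seteqP; split => x /=.
    by case=> i_min i_first; split => j /= ji; [exact: i_min | exact: i_first].
  by case=> i_min i_first; split => [j|j ji]; [apply: i_min | apply: i_first].
apply: measurableI; apply: fin_bigcap_measurable; rewrite ?finite_finset // => j _.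
  exact: measurable_set_ler.
exact: measurable_set_ltr.
Qed.

Lemma measurable_nearest_value : measurable_fun [set: T] (nearest_value f c).
Proof.
apply: measurable_sum => i; apply: measurable_funM => //.
exact: measurable_indic (measurable_nearest_cell i).
Qed.

Lemma step_fun_nearest_value : (0 < k)%N -> step_fun k (nearest_value f c).
Proof.
move=> k_gt0; exists k, (nearest_cell f c), c; split => //.
- exact: measurable_nearest_cell.
- by move=> i j _ _ [x [xi xj]]; exact: nearest_cell_uniq xi xj.
- apply/seteqP; split => // x _.
  by have [i xi] := nearest_cell_cover f c k_gt0 x; exists i.
Qed.

End measurable_nearest_value.

Lemma step_fun_range d (T : measurableType d) (R : realType) (k : nat) (h : T -> R) :
  step_fun k h -> exists c : 'I_k -> R, forall x, exists i, h x = c i.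
Proof.
case=> l [A [a [lk _ A_disj A_cover ->]]].
exists (fun i => oapp a 0 (insub (val i) : option 'I_l)) => x.
have [j _ xj] : (\bigcup_(i in [set: 'I_l]) A i) x by rewrite A_cover.
exists (widen_ord lk j); rewrite /= valK /= (bigD1 j) //= indicE mem_set // mulr1.
rewrite big1 ?addr0 // => i ij; rewrite indicE memNset ?mulr0 // => xi.
by move/eqP: ij; apply; apply: A_disj => //; exists x.
Qed.

Section Lnorm_fatou.
Context d (T : measurableType d) (R : realType) (mu : {measure set T -> \bar R}).
Local Open Scope ereal_scope.

Lemma Lnorm_fatou_infty (F : (T -> \bar R)^nat) (G : T -> \bar R) (B : \bar R) :
  (forall n x, 0 <= F n x) -> (forall x, 0 <= G x) ->
  (forall x, eventually_gt (F ^~ x) (G x)) ->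
  (\forall n \near \oo, Lnorm mu +oo (F n) <= B) -> Lnorm mu +oo G <= B.
Proof.
move=> F0 G0 FG [N _ FNB].
have B0 : 0 <= B := le_trans (Lnorm_ge0 _ _ _) (FNB N (leqnn N)).
rewrite unlock /=; case: ifPn => // mu0; apply/ess_supP.
have FB_ae : \forall x \ae mu, forall n, (N <= n)%N -> `|F n x| <= B.
  apply: ae_foralln => n; case: (leqP N n) => Nn; last exact: nearW.
  have := FNB n Nn; rewrite unlock /= mu0 => /ess_supP.
  by apply: filterS => x /= FnB _; exact: FnB.
apply: filterS FB_ae => x /= FxB; rewrite gee0_abs //.
apply: lee_fin_lt => a /FG [N' _ FN'].
have := FN' (maxn N N') (leq_maxr _ _); rewrite -(gee0_abs (F0 _ x)) => aF.
exact: le_trans (ltW aF) (FxB _ (leq_maxl _ _)).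
Qed.

Lemma Lnorm_fatou_fin (r : R) (F : (T -> \bar R)^nat) (G : T -> \bar R) (B : \bar R) :
  (0 < r)%R ->
  (forall n, measurable_fun [set: T] (F n)) -> measurable_fun [set: T] G ->
  (forall n x, 0 <= F n x) -> (forall x, 0 <= G x) ->
  (forall x, eventually_gt (F ^~ x) (G x)) ->
  (\forall n \near \oo, Lnorm mu r%:E (F n) <= B) -> Lnorm mu r%:E G <= B.
Proof.
move=> r0 mF mG F0 G0 FG FB.
have B0 : 0 <= B.
  by case: FB => N _ FNB; exact: le_trans (Lnorm_ge0 _ _ _) (FNB N (leqnn N)).
have powRK (z : \bar R) : 0 <= z -> z = (z `^ r) `^ r^-1.
  by move=> z0; rewrite -poweRrM mulfV ?gt_eqF // poweRe1.
have mpow (H : T -> \bar R) : measurable_fun [set: T] H ->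
    measurable_fun [set: T] (fun x => `|H x| `^ r).
  move=> mH; apply: (@measurableT_comp _ _ _ _ _ _ (poweR ^~ r)).
    exact: measurable_poweR.
  by apply: measurableT_comp => //; exact: abse_measurable.
rewrite (powRK _ (Lnorm_ge0 _ _ _)) (powRK B B0).
apply: gt0_ler_poweR.
- by rewrite invr_ge0 ltW.
- by rewrite in_itv /= poweR_ge0 leey.
- by rewrite in_itv /= poweR_ge0 leey.
rewrite poweR_Lnorm ?gt_eqF //.
apply: (@le_trans _ _ (\int[mu]_x limn_einf (fun n => `|F n x| `^ r))).
  apply: ge0_le_integral => //.
  - by move=> x _; exact: poweR_ge0.
  - exact: mpow.
  - apply: (@measurableT_comp _ _ _ _ _ _ (-%E)); first exact: oppe_measurable.
    apply: measurable_fun_limn_esup => n /=.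
    apply: (@measurableT_comp _ _ _ _ _ _ (-%E)); first exact: oppe_measurable.
    exact: mpow.
  - move=> x _; apply: limn_einf_ge.
    rewrite gee0_abs //; under eq_fun do rewrite gee0_abs //.
    exact: eventually_gt_poweR.
apply: le_trans (fatou _ _ _ _) _ => //.
- by move=> n; exact: mpow.
- by move=> n x _; exact: poweR_ge0.
apply: limn_einf_le; apply: filterS FB => n FnB.
rewrite -poweR_Lnorm ?gt_eqF //; apply: gt0_ler_poweR => //.
- exact: ltW.
- by rewrite in_itv /= Lnorm_ge0 leey.
- by rewrite in_itv /= B0 leey.
Qed.

Lemma Lnorm_fatou (p : \bar R) (F : (T -> \bar R)^nat) (G : T -> \bar R) (B : \bar R) :
  0 < p ->
  (forall n, measurable_fun [set: T] (F n)) -> measurable_fun [set: T] G ->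
  (forall n x, 0 <= F n x) -> (forall x, 0 <= G x) ->
  (forall x, eventually_gt (F ^~ x) (G x)) ->
  (\forall n \near \oo, Lnorm mu p (F n) <= B) -> Lnorm mu p G <= B.
Proof.
case: p => [r|_|//]; last by move=> *; exact: Lnorm_fatou_infty.
by rewrite lte_fin => r0; exact: Lnorm_fatou_fin.
Qed.

Lemma Lnorm_eq_abs (p : \bar R) (u v : T -> R) : (forall x, `|u x| = `|v x|)%R ->
  Lnorm mu p (EFin \o u) = Lnorm mu p (EFin \o v).
Proof.
move=> uv; rewrite -Lnorm_abse -[RHS]Lnorm_abse; congr Lnorm.
by apply/funext => x /=; rewrite uv.
Qed.

Lemma Lnorm_le (p : \bar R) (u v : T -> R) : 0 < p ->
  measurable_fun [set: T] u -> measurable_fun [set: T] v ->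
  (forall x, `|u x| <= `|v x|)%R -> Lnorm mu p (EFin \o u) <= Lnorm mu p (EFin \o v).
Proof.
move=> p0 mfu mfv uv; rewrite -Lnorm_abse -[leRHS]Lnorm_abse.
have mabs (w : T -> R) : measurable_fun [set: T] w ->
    measurable_fun [set: T] (abse \o (EFin \o w)).
  by move=> mw; apply: measurableT_comp; [exact: abse_measurable | exact/measurable_EFinP].
apply: (@Lnorm_fatou p (fun _ => abse \o (EFin \o v))) => //.
- by move=> _; exact: mabs.
- exact: mabs.
- by move=> _ x; exact: abse_ge0.
- by move=> x; exact: abse_ge0.
- by move=> x a ua; apply: nearW => n; apply: lt_le_trans ua _; rewrite /= lee_fin.
- exact: nearW.
Qed.

End Lnorm_fatou.

Section proximinal.
Context d (T : measurableType d) (R : realType) (mu : {measure set T -> \bar R})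
  (p : \bar R) (k : nat).
Hypotheses (p1 : (1 <= p)%E) (k_gt0 : (0 < k)%N).
Variable f : T -> R.
Hypotheses (mf : measurable_fun [set: T] f) (ff : finite_norm mu p f).
Local Open Scope ereal_scope.

Let p_gt0 : 0 < p. Proof. by apply: lt_le_trans p1; rewrite lte_fin. Qed.

Let mf_nearest (c : 'I_k -> R) : measurable_fun [set: T] (f \- nearest_value f c)%R.
Proof. by apply: measurable_funB => //; exact: measurable_nearest_value. Qed.

Lemma Gpk_nearest_value (c : 'I_k -> R) :
  Lnorm mu p (EFin \o (f \- nearest_value f c)%R) < +oo -> Gpk mu p k (nearest_value f c).
Proof.
move=> fg_lty; split; first exact: step_fun_nearest_value.
split; first exact: measurable_nearest_value.
have -> : nearest_value f c = (f \+ (nearest_value f c \- f))%R.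
  by apply/funext => x /=; rewrite addrC subrK.
have mgf : measurable_fun [set: T] (nearest_value f c \- f)%R.
  by apply: measurable_funB => //; exact: measurable_nearest_value.
apply: le_lt_trans (eminkowski mu mf mgf p1) _.
rewrite lte_add_pinfty // (@Lnorm_eq_abs _ _ _ mu p _ (f \- nearest_value f c)%R) //.
by move=> x; rewrite distrC.
Qed.

Lemma Dpk_lty : Dpk mu p k f < +oo.
Proof.
pose c0 (_ : 'I_k) : R := 0%R.
have f0 : (f \- nearest_value f c0)%R = f.
  by apply/funext => x /=; have [i ->] := nearest_value_range f c0 k_gt0 x; rewrite subr0.
apply: le_lt_trans (ereal_inf_lbound _) _.
  by exists (nearest_value f c0); [apply: Gpk_nearest_value; rewrite f0 |].
by rewrite f0.
Qed.

Lemma Dpk_fin_num : Dpk mu p k f \is a fin_num.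
Proof.
rewrite fin_numElt Dpk_lty andbT (@lt_le_trans _ _ 0) ?ltNy0 //.
by apply: le_ereal_inf_tmp => _ [h _ <-]; exact: Lnorm_ge0.
Qed.

Lemma Dpk_nearest_value (e : R) : (0 < e)%R -> exists c : 'I_k -> R,
  Lnorm mu p (EFin \o (f \- nearest_value f c)%R) <= Dpk mu p k f + e%:E.
Proof.
move=> e0; have [_ [h [h_step [mh _]] <-] h_lt] := lb_ereal_inf_adherent e0 Dpk_fin_num.
have [c hc] := step_fun_range h_step.
exists c; apply: le_trans (ltW h_lt); apply: Lnorm_le => //; first exact: measurable_funB.
by move=> x /=; have [i ->] := hc x; exact: nearest_value_le.
Qed.

Lemma nearest_value_attains_Dpk : exists2 g, Gpk mu p k g &
  Lnorm mu p (EFin \o (f \- g)%R) = Dpk mu p k f.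
Proof.
set D := Dpk mu p k f.
have /choice[c c_approx] : forall n, exists c : 'I_k -> R,
    Lnorm mu p (EFin \o (f \- nearest_value f c)%R) <= D + (n.+1%:R^-1)%:E.
  by move=> n; apply: Dpk_nearest_value; rewrite invr_gt0.
have [s s_incr [L cL]] := common_subsequence c.
pose g := nearest_value f L.
have g_le : Lnorm mu p (EFin \o (f \- g)%R) <= D.
  apply/lee_addgt0Pr => e e0.
  rewrite (@Lnorm_eq_abs _ _ _ mu p _ (fun x => `|f x - g x|)%R); last first.
    by move=> x; rewrite normr_id.
  apply: (@Lnorm_fatou _ _ _ mu p
    (fun n => EFin \o (fun x => `|f x - nearest_value f (c (s n)) x|)%R)) => //.
  - by move=> n; apply/measurable_EFinP; exact: measurableT_comp (mf_nearest _).
  - by apply/measurable_EFinP; exact: measurableT_comp (mf_nearest _).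
  - by move=> n x; rewrite /= lee_fin.
  - by move=> x; rewrite /= lee_fin.
  - by move=> x; exact: (nearest_value_eventually_gt (f := f) (c := c \o s) (x := x) k_gt0 cL).
  have : \forall n \near \oo, ((s n).+1%:R^-1 < e)%R.
    exact: cvgn_increasing_seq s_incr _ (near_infty_natSinv_lt (PosNum e0)).
  apply: filterS => n sn_small.
  rewrite (@Lnorm_eq_abs _ _ _ mu p _ (f \- nearest_value f (c (s n)))%R); last first.
    by move=> x; rewrite normr_id.
  by apply: le_trans (c_approx (s n)) _; rewrite leeD2l ?Dpk_fin_num // lee_fin ltW.
have g_in : Gpk mu p k g by apply: Gpk_nearest_value; exact: le_lt_trans g_le Dpk_lty.
exists g => //; apply/le_anti; rewrite g_le /=.
by apply: ereal_inf_lbound; exists g.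
Qed.

End proximinal.

Theorem theorem1p1 (d : measure_display) (T : measurableType d) (R : realType)
  (mu : {measure set T -> \bar R}) (p : \bar R) (k : nat) :
  mu [set: T] != 0%E -> (1 <= p)%E -> (1 <= k)%N ->
  forall f : T -> R, inLp mu p f ->
  exists2 g : T -> R, Gpk mu p k g & Lnorm mu p (EFin \o (f \- g)) = Dpk mu p k f.
Proof.
move=> _ p1 k_gt0 f [mf ff].
exact: nearest_value_attains_Dpk.
Qed.
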